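(* In the multi-parameter setting described in the context, for every POVM $\{M_m\}$ the Fisher information matrix satisfies $F_M(\theta)\le C_\Upsilon(\theta)$ as $m\times m$ real symmetric matrices (i.e. $C_\Upsilon(\theta)-F_M(\theta)$ is positive semidefinite).
   Context: A multi-parameter quantum channel on density matrices on $\mathbb{C}^d$ is $\rho_0\mapsto\sum_kE_k(\theta)\rho_0E_k(\theta)^\dagger$ with $\theta=(\theta^1,\dots,\theta^m)\in\mathbb{R}^m$, Kraus operators differentiable in $\theta$, $\sum_kE_k^\dagger E_k=I$. The input is a fixed pure state $\rho_0=|\psi_0\rangle\langle\psi_0|$ and $\rho_{out}(\theta)$ the output. Canonical Kraus operators $\{\Upsilon_k(\theta)\}_{k=1}^d$: a differentiable Kraus representation of the same channel with $\mathrm{tr}\{\Upsilon_k\rho_0\Upsilon_j^\dagger\}=\delta_{jk}p_k(\theta)$, whose output eigenvectors $|w_k\rangle=p_k^{-1/2}\Upsilon_k|\psi_0\rangle$ (for $p_k>0$) extend to an orthonormal basis differentiable in $\theta$. Write $X^{(j)}=\partial X/\partial\theta^j$. $C_\Upsilon(\theta)_{jk}=4\sum_l\mathrm{Re}\,\mathrm{tr}\{\Upsilon_l^{(j)}\rho_0\Upsilon_l^{(k)\dagger}\}$. For a POVM $\{M_m\}$ (Hermitian, nonnegative, summing to $I$) with outcome probabilities $p(m;\theta)=\mathrm{tr}\{\rho_{out}(\theta)M_m\}$, the Fisher information matrix is $F_M(\theta)_{jk}=\sum_m p(m;\theta)^{-1}\frac{\partial p(m;\theta)}{\partial\theta^j}\frac{\partial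 p(m;\theta)}{\partial\theta^k}$. *)

From HB Require Import structures.
From mathcomp Require Import all_boot all_order all_algebra.
From mathcomp Require Import all_classical all_reals all_analysis.
From mathcomp Require Import complex.
Set Implicit Arguments. Unset Strict Implicit. Unset Printing Implicit Defensive.
Import Order.TTheory GRing.Theory Num.Theory.
Import numFieldNormedType.Exports.
Local Open Scope ring_scope.
Local Open Scope complex_scope.

Section QDefs.
Variable R : realType.
Local Notation C := R[i].

Definition adj (p q : nat) (A : 'M[C]_(p, q)) : 'M[C]_(q, p) :=
  (map_mx Num.conj A)^T.

Definition hermitian (d : nat) (A : 'M[C]_d) : Prop := adj A = A.

Definition psd (d : nat) (A : 'M[C]_d) : Prop :=
  forall v : 'cV[C]_d, 0 <= (adj v *m A *m v) 0 0.

Definition density (d : nat) (rho : 'M[C]_d) : Prop :=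
  hermitian rho /\ psd rho /\ \tr rho = 1.

Definition povm (d n : nat) (M : 'I_n -> 'M[C]_d) : Prop :=
  (forall o, hermitian (M o)) /\ (forall o, psd (M o)) /\
  \sum_(o < n) M o = 1%:M.

Definition evec (m : nat) (j : 'I_m) : 'rV[R]_m := delta_mx 0 j.

Definition mx_differentiable (m p q : nat) (F : 'rV[R]_m -> 'M[C]_(p, q)) : Prop :=
  forall (a : 'I_p) (b : 'I_q) (th : 'rV[R]_m),
    differentiable (fun t : 'rV[R]_m => (complex.Re (F t a b) : R^o)) th /\
    differentiable (fun t : 'rV[R]_m => (complex.Im (F t a b) : R^o)) th.

Definition pderiv (m p q : nat) (j : 'I_m) (F : 'rV[R]_m -> 'M[C]_(p, q))
    (th : 'rV[R]_m) : 'M[C]_(p, q) :=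
  \matrix_(a, b)
    (('D_(evec j) (fun t => complex.Re (F t a b)) th) +i*
     ('D_(evec j) (fun t => complex.Im (F t a b)) th)).

Definition proj (d : nat) (psi0 : 'cV[C]_d) : 'M[C]_d := psi0 *m adj psi0.

Definition channel (d K : nat) (E : 'I_K -> 'M[C]_d) (rho : 'M[C]_d) : 'M[C]_d :=
  \sum_(k < K) (E k *m rho *m adj (E k)).

Definition kraus_family (m d K : nat) (E : 'rV[R]_m -> 'I_K -> 'M[C]_d) : Prop :=
  (forall th, \sum_(k < K) (adj (E th k) *m E th k) = 1%:M) /\
  (forall k, mx_differentiable (fun th => E th k)).

Definition canonical_kraus (m d K : nat) (E : 'rV[R]_m -> 'I_K -> 'M[C]_d)
    (psi0 : 'cV[C]_d) (U : 'rV[R]_m -> 'I_d -> 'M[C]_d) : Prop :=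
  kraus_family U /\
  (forall th rho, density rho -> channel (E th) rho = channel (U th) rho) /\
  (exists p : 'rV[R]_m -> 'I_d -> R,
     (forall th j k,
        \tr (U th k *m proj psi0 *m adj (U th j)) = ((j == k)%:R * p th k)%:C) /\
     (* the output eigenvectors extend to an orthonormal basis
        differentiable in theta *)
     (exists W : 'rV[R]_m -> 'M[C]_d,
        mx_differentiable W /\
        (forall th, adj (W th) *m W th = 1%:M) /\
        (forall th k, 0 < p th k ->
           col k (W th) = ((Num.sqrt (p th k))^-1)%:C *: (U th k *m psi0)))).

Definition C_Ups (m d : nat) (U : 'rV[R]_m -> 'I_d -> 'M[C]_d)
    (psi0 : 'cV[C]_d) (th : 'rV[R]_m) : 'M[R]_m :=
  \matrix_(j, k) (4 * \sum_(l < d)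
     complex.Re (\tr (pderiv j (fun t => U t l) th *m proj psi0
                       *m adj (pderiv k (fun t => U t l) th)))).

Definition outprob (m d K n : nat) (E : 'rV[R]_m -> 'I_K -> 'M[C]_d)
    (psi0 : 'cV[C]_d) (M : 'I_n -> 'M[C]_d) (o : 'I_n) (th : 'rV[R]_m) : R :=
  complex.Re (\tr (channel (E th) (proj psi0) *m M o)).

(* Fisher information matrix; terms with p(o;theta) = 0 contribute 0
   (MathComp convention 0^-1 = 0). *)
Definition fisher (m d K n : nat) (E : 'rV[R]_m -> 'I_K -> 'M[C]_d)
    (psi0 : 'cV[C]_d) (M : 'I_n -> 'M[C]_d) (th : 'rV[R]_m) : 'M[R]_m :=
  \matrix_(j, k) \sum_(o < n)
     ((outprob E psi0 M o th)^-1 *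
      'D_(evec j) (outprob E psi0 M o) th *
      'D_(evec k) (outprob E psi0 M o) th).

Definition mx_le (m : nat) (A B : 'M[R]_m) : Prop :=
  forall v : 'rV[R]_m, 0 <= (v *m (B - A) *m v^T) 0 0.

End QDefs.

(* Fix a direction w in parameter space and put X_l = Ups_l psi0 and
   B_l = sum_j w_j (d_j Ups_l) psi0.  Then p(m) = sum_l <X_l|M_m|X_l>, its
   derivative along w is 2 sum_l Re <X_l|M_m|B_l>, and by completeness of the
   POVM w^T C w = 4 sum_l <B_l|B_l> = sum_m 4 sum_l <B_l|M_m|B_l>.  Cauchy-Schwarz
   for the semi-inner product sum_l Re <.|M_m|.> bounds the m-th Fisher term by
   the m-th summand of w^T C w. *)

From Pilot Require Import Defs.
From mathcomp Require Import all_boot all_order all_algebra.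
From mathcomp Require Import all_classical all_reals all_analysis.
From mathcomp Require Import complex.
From mathcomp Require Import ring lra.
Set Implicit Arguments. Unset Strict Implicit. Unset Printing Implicit Defensive.
Import Order.TTheory GRing.Theory Num.Theory.
Import numFieldNormedType.Exports.
Local Open Scope ring_scope.
Local Open Scope complex_scope.
(* [Num.Theory] also exports an [Re] and an [Im]. *)
Local Notation Re := complex.Re.
Local Notation Im := complex.Im.

Section ComplexParts.
Variable R : realType.
Implicit Types x y : R[i].

Lemma ReD x y : Re (x + y) = Re x + Re y. Proof. by case: x => a b; case: y => c d. Qed.
Lemma ImD x y : Im (x + y) = Im x + Im y. Proof. by case: x => a b; case: y => c d. Qed.
Lemma ReM x y : Re (x * y) = Re x * Re y - Im x * Im y.
Proof. by case: x => a b; case: y => c d. Qed.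
Lemma ImM x y : Im (x * y) = Re x * Im y + Im x * Re y.
Proof. by case: x => a b; case: y => c d. Qed.
Lemma ReJ x : Re (Num.conj x) = Re x. Proof. by case: x. Qed.
Lemma ImJ x : Im (Num.conj x) = - Im x. Proof. by case: x. Qed.
Lemma Re_realM (c : R) x : Re (c%:C * x) = c * Re x.
Proof. by case: x => a b /=; ring. Qed.

Lemma Re_sum I (r : seq I) (F : I -> R[i]) :
  Re (\sum_(i <- r) F i) = \sum_(i <- r) Re (F i).
Proof. exact: (big_morph _ ReD). Qed.

End ComplexParts.

Section RealInequalities.
Variable R : realFieldType.
Implicit Types a b c : R.

Lemma quadratic_ge0_discr a b c :
  (forall t, 0 <= a + 2 * b * t + c * t ^+ 2) -> 0 <= c -> b ^+ 2 <= a * c.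
Proof.
move=> q_ge0 c_ge0; have [c0|c_neq0] := eqVneq c 0.
  rewrite c0 mulr0; have [->|b_neq0] := eqVneq b 0; first by rewrite expr0n.
  (* a linear function with nonzero slope takes negative values *)
  have := q_ge0 (- (a + 1) / (2 * b)).
  have -> : 2 * b * (- (a + 1) / (2 * b)) = - (a + 1) by field.
  by rewrite c0 mul0r addr0; lra.
have c_gt0 : 0 < c by rewrite lt_def c_neq0.
have := q_ge0 (- b / c).
have -> : a + 2 * b * (- b / c) + c * (- b / c) ^+ 2 = (a * c - b ^+ 2) / c by field.
by rewrite pmulr_lge0 ?invr_gt0 // subr_ge0.
Qed.

Lemma invr_mul_sqr_le a b c :
  0 <= a -> 0 <= c -> b ^+ 2 <= a * c -> a^-1 * b ^+ 2 <= c.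
Proof.
rewrite le0r => /orP[/eqP->|a_gt0] c_ge0 bac; first by rewrite invr0 mul0r.
by rewrite ler_pdivrMl.
Qed.

End RealInequalities.

Lemma mxtrace11 (R : pzRingType) (A : 'M[R]_1) : \tr A = A 0 0.
Proof. by rewrite /mxtrace big_ord1. Qed.

Section Adjoint.
Variable R : realType.
Local Notation C := R[i].

Lemma adjE p q (A : 'M[C]_(p, q)) i j : adj A i j = Num.conj (A j i).
Proof. by rewrite !mxE. Qed.

Lemma adjM p q r (A : 'M[C]_(p, q)) (B : 'M[C]_(q, r)) :
  adj (A *m B) = adj B *m adj A.
Proof. by rewrite /adj map_mxM trmx_mul. Qed.

Lemma adjK p q (A : 'M[C]_(p, q)) : adj (adj A) = A.
Proof. by apply/matrixP => i j; rewrite !adjE conjCK. Qed.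

Lemma adjD p q (A B : 'M[C]_(p, q)) : adj (A + B) = adj A + adj B.
Proof. by apply/matrixP => i j; rewrite !mxE rmorphD. Qed.

Lemma adj0 p q : adj (0 : 'M[C]_(p, q)) = 0.
Proof. by apply/matrixP => i j; rewrite !mxE rmorph0. Qed.

Lemma adjZ_real p q (c : R) (A : 'M[C]_(p, q)) : adj (c%:C *: A) = c%:C *: adj A.
Proof.
apply/matrixP => i j; rewrite !mxE rmorphM; congr (_ * _).
by apply/eqP; rewrite eq_complex /= oppr0 !eqxx.
Qed.

End Adjoint.

Section ComplexDerive.
Variables (R : realType) (m : nat) (x v : 'rV[R]_m).
Local Notation C := R[i].

Lemma is_derive_ext {f g : 'rV[R]_m -> R} {df dg : R} :
  is_derive x v f df -> f =1 g -> df = dg -> is_derive x v g dg.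
Proof. by move=> + /funext<- <-. Qed.

Definition is_cderive (f : 'rV[R]_m -> C) (df : C) : Prop :=
  is_derive x v (fun t => Re (f t)) (Re df) /\
  is_derive x v (fun t => Im (f t)) (Im df).

Lemma is_cderive_ext {f g df} : is_cderive f df -> f =1 g -> is_cderive g df.
Proof. by move=> + /funext<-. Qed.

Lemma is_cderive_cst (c : C) : is_cderive (fun=> c) 0.
Proof. by split; apply: is_derive_cst. Qed.

Lemma is_cderiveD f g df dg :
  is_cderive f df -> is_cderive g dg ->
  is_cderive (fun t => f t + g t) (df + dg).
Proof.
move=> [f1 f2] [g1 g2]; split.
- by apply: is_derive_ext (is_deriveD f1 g1) _ (esym (ReD _ _)) => t; rewrite /= ReD.
- by apply: is_derive_ext (is_deriveD f2 g2) _ (esym (ImD _ _)) => t; rewrite /= ImD.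
Qed.

Lemma is_cderiveM f g df dg :
  is_cderive f df -> is_cderive g dg ->
  is_cderive (fun t => f t * g t) (df * g x + f x * dg).
Proof.
move=> [f1 f2] [g1 g2]; split.
- apply: is_derive_ext (is_deriveB (is_deriveM f1 g1) (is_deriveM f2 g2)) _ _.
    by move=> t; rewrite /= ReM.
  by rewrite ReD !ReM /GRing.scale /=; ring.
- apply: is_derive_ext (is_deriveD (is_deriveM f1 g2) (is_deriveM f2 g1)) _ _.
    by move=> t; rewrite /= ImM.
  by rewrite ImD !ImM /GRing.scale /=; ring.
Qed.

Lemma is_cderiveJ f df :
  is_cderive f df -> is_cderive (fun t => Num.conj (f t)) (Num.conj df).
Proof.
move=> [f1 f2]; split.
- by apply: is_derive_ext f1 _ (esym (ReJ _)) => t; rewrite ReJ.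
- by apply: is_derive_ext (is_deriveN f2) _ (esym (ImJ _)) => t; rewrite /= ImJ.
Qed.

Lemma is_cderive_sum I (r : seq I) (F : I -> 'rV[R]_m -> C) (dF : I -> C) :
  (forall i, is_cderive (F i) (dF i)) ->
  is_cderive (fun t => \sum_(i <- r) F i t) (\sum_(i <- r) dF i).
Proof.
move=> dFi; elim: r => [|a r IH].
  by rewrite big_nil; apply: (is_cderive_ext (is_cderive_cst 0)) => t; rewrite big_nil.
rewrite big_cons; apply: (is_cderive_ext (is_cderiveD (dFi a) IH)) => t.
by rewrite big_cons.
Qed.

End ComplexDerive.

Section MatrixDerive.
Variables (R : realType) (m : nat) (x v : 'rV[R]_m).
Local Notation C := R[i].

Definition is_mxderive p q (F : 'rV[R]_m -> 'M[C]_(p, q)) (dF : 'M[C]_(p, q)) :=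
  forall a b, is_cderive x v (fun t => F t a b) (dF a b).

Lemma is_mxderive_cst p q (A : 'M[C]_(p, q)) : is_mxderive (fun=> A) 0.
Proof. by move=> a b; rewrite mxE; apply: is_cderive_cst. Qed.

Lemma is_mxderiveM p q r (F : 'rV[R]_m -> 'M[C]_(p, q)) (G : 'rV[R]_m -> 'M[C]_(q, r))
    dF dG :
  is_mxderive F dF -> is_mxderive G dG ->
  is_mxderive (fun t => F t *m G t) (dF *m G x + F x *m dG).
Proof.
move=> dFab dGab a b; rewrite !mxE -big_split /=.
apply: (is_cderive_ext (is_cderive_sum _ (fun c => is_cderiveM (dFab a c) (dGab c b)))).
by move=> t; rewrite mxE.
Qed.

Lemma is_mxderive_adj p q (F : 'rV[R]_m -> 'M[C]_(p, q)) dF :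
  is_mxderive F dF -> is_mxderive (fun t => adj (F t)) (adj dF).
Proof.
move=> dFab a b; rewrite adjE.
by apply: (is_cderive_ext (is_cderiveJ (dFab b a))) => t; rewrite adjE.
Qed.

End MatrixDerive.

Lemma is_mxderive_pderiv (R : realType) m p q (j : 'I_m)
    (F : 'rV[R]_m -> 'M[R[i]]_(p, q)) th :
  mx_differentiable F -> is_mxderive th (evec R j) F (pderiv j F th).
Proof.
move=> dF a b; have [dRe dIm] := dF a b th.
by rewrite mxE; split; apply: derivableP; apply: diff_derivable.
Qed.

Section HermitianForm.
Variables (R : realType) (d : nat).
Local Notation C := R[i].
Implicit Types (N : 'M[C]_d) (Y Z : 'cV[C]_d).

Definition hform N Y Z : R := Re ((adj Y *m N *m Z) 0 0).

Lemma hformDl N Y1 Y2 Z : hform N (Y1 + Y2) Z = hform N Y1 Z + hform N Y2 Z.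
Proof. by rewrite /hform adjD !mulmxDl mxE ReD. Qed.

Lemma hformDr N Y Z1 Z2 : hform N Y (Z1 + Z2) = hform N Y Z1 + hform N Y Z2.
Proof. by rewrite /hform mulmxDr mxE ReD. Qed.

Lemma hformZl N (c : R) Y Z : hform N (c%:C *: Y) Z = c * hform N Y Z.
Proof. by rewrite /hform adjZ_real -!scalemxAl mxE Re_realM. Qed.

Lemma hformZr N Y (c : R) Z : hform N Y (c%:C *: Z) = c * hform N Y Z.
Proof. by rewrite /hform -scalemxAr mxE Re_realM. Qed.

Lemma hform_suml N I (r : seq I) (Y : I -> 'cV[C]_d) Z :
  hform N (\sum_(i <- r) Y i) Z = \sum_(i <- r) hform N (Y i) Z.
Proof.
apply: (big_morph (hform N ^~ Z) (fun Y1 Y2 => hformDl N Y1 Y2 Z)).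
by rewrite /hform adj0 !mul0mx mxE.
Qed.

Lemma hform_sumr N Y I (r : seq I) (Z : I -> 'cV[C]_d) :
  hform N Y (\sum_(i <- r) Z i) = \sum_(i <- r) hform N Y (Z i).
Proof.
apply: (big_morph (hform N Y) (hformDr N Y)).
by rewrite /hform mulmx0 mxE.
Qed.

Lemma hform_sum_mx I (r : seq I) (N : I -> 'M[C]_d) Y Z :
  hform (\sum_(i <- r) N i) Y Z = \sum_(i <- r) hform (N i) Y Z.
Proof.
apply: (big_morph (fun N => hform N Y Z)) => [N1 N2|].
  by rewrite /hform mulmxDr mulmxDl mxE ReD.
by rewrite /hform mulmx0 mul0mx mxE.
Qed.

Lemma hformC N Y Z : Defs.hermitian N -> hform N Y Z = hform N Z Y.
Proof.
move=> hN; rewrite /hform; have -> : adj Z *m N *m Y = adj (adj Y *m N *m Z).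
  by rewrite !adjM adjK hN mulmxA.
by rewrite adjE ReJ.
Qed.

Lemma hform_ge0 N Y : psd N -> 0 <= hform N Y Y.
Proof. by move=> pN; have := pN Y; rewrite lecE => /andP[]. Qed.

End HermitianForm.

Lemma hform_lin_comb (R : realType) m d (N : 'M[R[i]]_d) (w : 'rV[R]_m)
    (Y Z : 'I_m -> 'cV[R[i]]_d) :
  hform N (\sum_j (w 0 j)%:C *: Y j) (\sum_k (w 0 k)%:C *: Z k) =
  \sum_j \sum_k w 0 j * w 0 k * hform N (Y j) (Z k).
Proof.
rewrite hform_suml; apply: eq_bigr => j _; rewrite hformZl hform_sumr mulr_sumr.
by apply: eq_bigr => k _; rewrite hformZr mulrA.
Qed.

Lemma hform_sum_cauchy_schwarz (R : realType) d I (r : seq I) (N : 'M[R[i]]_d)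
    (X B : I -> 'cV[R[i]]_d) :
  Defs.hermitian N -> psd N ->
  (\sum_(i <- r) hform N (X i) (B i)) ^+ 2 <=
  (\sum_(i <- r) hform N (X i) (X i)) * \sum_(i <- r) hform N (B i) (B i).
Proof.
move=> hN pN; apply: quadratic_ge0_discr; last by apply: sumr_ge0 => i _; apply: hform_ge0.
move=> t; have : 0 <= \sum_(i <- r) hform N (X i + t%:C *: B i) (X i + t%:C *: B i).
  by apply: sumr_ge0 => i _; apply: hform_ge0.
congr (_ <= _); rewrite mulr_sumr !mulr_suml -!big_split /=; apply: eq_bigr => i _.
by rewrite !hformDl !hformDr !hformZl !hformZr (hformC (B i) (X i) hN); ring.
Qed.

Lemma is_derive_hform_diag (R : realType) m d (x v : 'rV[R]_m) (N : 'M[R[i]]_d)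
    (Y : 'rV[R]_m -> 'cV[R[i]]_d) dY :
  is_mxderive x v Y dY ->
  is_derive x v (fun t => hform N (Y t) (Y t)) (hform N dY (Y x) + hform N (Y x) dY).
Proof.
move=> dYab; have [+ _] := is_mxderiveM (is_mxderiveM (is_mxderive_adj dYab)
  (is_mxderive_cst x v N)) dYab 0 0.
by rewrite /hform mulmx0 addr0 mxE ReD.
Qed.

Section QuadraticForms.
Variables (R : comPzRingType) (m : nat).
Implicit Types (w : 'rV[R]_m) (A : 'M[R]_m).

Lemma quad_formE w A : (w *m A *m w^T) 0 0 = \sum_j \sum_k w 0 j * w 0 k * A j k.
Proof.
rewrite mxE exchange_big; apply: eq_bigr => k _; rewrite !mxE mulr_suml.
by apply: eq_bigr => j _; rewrite mulrAC.
Qed.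

Lemma quad_form_gram n w (a : 'I_n -> R) (f : 'I_n -> 'I_m -> R) :
  (w *m (\matrix_(j, k) \sum_(o < n) a o * f o j * f o k) *m w^T) 0 0 =
  \sum_(o < n) a o * (\sum_j w 0 j * f o j) ^+ 2.
Proof.
rewrite quad_formE; under eq_bigr => j _ do under eq_bigr => k _ do
  rewrite mxE mulr_sumr.
under eq_bigr => j _ do rewrite exchange_big /=.
rewrite exchange_big; apply: eq_bigr => o _ /=.
rewrite expr2 mulr_suml mulr_sumr; apply: eq_bigr => j _.
by rewrite !mulr_sumr; apply: eq_bigr => k _; ring.
Qed.

End QuadraticForms.

Lemma mx_le_quad (R : realType) m (A B : 'M[R]_m) :
  (forall w : 'rV[R]_m, (w *m A *m w^T) 0 0 <= (w *m B *m w^T) 0 0) -> mx_le A B.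
Proof. by move=> AB w; rewrite mulmxBr mulmxBl mxE [X in _ + X]mxE subr_ge0. Qed.

Lemma Re_tr_proj (R : realType) d (A B : 'M[R[i]]_d) (psi0 : 'cV[R[i]]_d) :
  Re (\tr (A *m Defs.proj psi0 *m adj B)) = hform 1%:M (B *m psi0) (A *m psi0).
Proof.
have -> : A *m Defs.proj psi0 *m adj B = A *m psi0 *m (adj psi0 *m adj B).
  by rewrite !mulmxA.
by rewrite mxtrace_mulC mxtrace11 /hform mulmx1 adjM mulmxA.
Qed.

Lemma proj_density (R : realType) d (psi0 : 'cV[R[i]]_d) :
  adj psi0 *m psi0 = 1%:M -> density (Defs.proj psi0).
Proof.
move=> psi0_unit; split; [|split].
- by rewrite /Defs.hermitian /Defs.proj adjM adjK.
- move=> w; have -> : adj w *m Defs.proj psi0 *m w = adj (adj psi0 *m w) *m (adj psi0 *m w).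
    by rewrite /Defs.proj adjM adjK !mulmxA.
  rewrite mxE big_ord1 adjE mulrC.
  by case: (_ 0 0) => a b; rewrite lecE /= mulrN mulrC addNr eqxx /=; nra.
- by rewrite /Defs.proj mxtrace_mulC psi0_unit mxtrace11 mxE.
Qed.

Section FisherBound.
Variables (R : realType) (m d K n : nat).
Variables (E : 'rV[R]_m -> 'I_K -> 'M[R[i]]_d) (psi0 : 'cV[R[i]]_d).
Variables (U : 'rV[R]_m -> 'I_d -> 'M[R[i]]_d) (M : 'I_n -> 'M[R[i]]_d).
Variable th : 'rV[R]_m.
Hypothesis same_output :
  forall t, channel (E t) (Defs.proj psi0) = channel (U t) (Defs.proj psi0).
Hypothesis U_differentiable : forall l, mx_differentiable (fun t => U t l).
Hypothesis M_hermitian : forall o, Defs.hermitian (M o).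
Hypothesis M_psd : forall o, psd (M o).
Hypothesis M_sum : \sum_(o < n) M o = 1%:M.

Let Y l t := U t l *m psi0.
Let dY j l := pderiv j (fun t => U t l) th *m psi0.
Let dY_along (w : 'rV[R]_m) l := \sum_j (w 0 j)%:C *: dY j l.

Lemma outprobE o t : outprob E psi0 M o t = \sum_l hform (M o) (Y l t) (Y l t).
Proof.
rewrite /outprob same_output /channel mulmx_suml (raddf_sum (@mxtrace _ d)) Re_sum /=.
apply: eq_bigr => l _; rewrite /hform /Y /Defs.proj.
have -> : U t l *m (psi0 *m adj psi0) *m adj (U t l) *m M o =
          U t l *m psi0 *m (adj (U t l *m psi0) *m M o) by rewrite adjM !mulmxA.
by rewrite mxtrace_mulC mxtrace11 mulmxA.
Qed.

Lemma outprob_derive o j :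
  'D_(evec R j) (outprob E psi0 M o) th = 2 * \sum_l hform (M o) (Y l th) (dY j l).
Proof.
have dYl l : is_mxderive th (evec R j) (Y l) (dY j l).
  have := is_mxderiveM (is_mxderive_pderiv j th (U_differentiable l))
                        (is_mxderive_cst th (evec R j) psi0).
  by rewrite mulmx0 addr0.
have -> : outprob E psi0 M o = \sum_(l < d) (fun t => hform (M o) (Y l t) (Y l t)).
  by apply/funext => t; rewrite outprobE fct_sumE.
case: (is_derive_sum (fun l => is_derive_hform_diag (M o) (dYl l))) => _ ->.
by rewrite mulr_sumr; apply: eq_bigr => l _; rewrite (hformC _ _ (M_hermitian o)); ring.
Qed.

Lemma quad_fisher w : (w *m fisher E psi0 M th *m w^T) 0 0 =
  \sum_o (outprob E psi0 M o th)^-1 * (2 * \sum_l hform (M o) (Y l th) (dY_along w l)) ^+ 2.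
Proof.
rewrite (quad_form_gram w (fun o => (outprob E psi0 M o th)^-1)
                         (fun o j => 'D_(evec R j) (outprob E psi0 M o) th)).
apply: eq_bigr => o _; congr (_ * _ ^+ 2).
under eq_bigr => j _ do rewrite outprob_derive mulrCA mulr_sumr.
rewrite -mulr_sumr exchange_big /=; congr (_ * _); apply: eq_bigr => l _.
by rewrite hform_sumr; apply: eq_bigr => j _; rewrite hformZr.
Qed.

Lemma quad_C_Ups w : (w *m C_Ups U psi0 th *m w^T) 0 0 =
  \sum_o 4 * \sum_l hform (M o) (dY_along w l) (dY_along w l).
Proof.
transitivity (4 * \sum_l hform 1%:M (dY_along w l) (dY_along w l)); last first.
  rewrite -mulr_sumr exchange_big /=; congr (_ * _); apply: eq_bigr => l _.
  by rewrite -hform_sum_mx M_sum.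
rewrite quad_formE.
under eq_bigr => j _ do under eq_bigr => k _ do
  rewrite mxE (eq_bigr _ (fun l _ => Re_tr_proj _ _ _)) mulrCA mulr_sumr.
under eq_bigr => j _ do rewrite -mulr_sumr exchange_big /=.
rewrite -mulr_sumr exchange_big /=; congr (_ * _); apply: eq_bigr => l _.
rewrite hform_lin_comb exchange_big; apply: eq_bigr => j _; apply: eq_bigr => k _.
by rewrite (mulrC (w 0 k)).
Qed.

Lemma fisher_le_C_Ups : mx_le (fisher E psi0 M th) (C_Ups U psi0 th).
Proof.
apply: mx_le_quad => w; rewrite quad_fisher quad_C_Ups; apply: ler_sum => o _.
rewrite outprobE; apply: invr_mul_sqr_le.
- by apply: sumr_ge0 => l _; apply: hform_ge0.
- by apply: mulr_ge0 => //; apply: sumr_ge0 => l _; apply: hform_ge0.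
rewrite exprMn [in X in _ <= X]mulrCA -natrX ler_pM2l //.
exact: hform_sum_cauchy_schwarz (M_hermitian o) (M_psd o).
Qed.

End FisherBound.

Theorem theorem2 (R : realType) (m d K n : nat)
    (E : 'rV[R]_m -> 'I_K -> 'M[R[i]]_d) (psi0 : 'cV[R[i]]_d)
    (U : 'rV[R]_m -> 'I_d -> 'M[R[i]]_d) (M : 'I_n -> 'M[R[i]]_d)
    (th : 'rV[R]_m) :
  kraus_family E ->
  (adj psi0 *m psi0 = 1%:M) ->
  canonical_kraus E psi0 U ->
  povm M ->
  mx_le (fisher E psi0 M th) (C_Ups U psi0 th).
Proof.
move=> _ psi0_unit [[_ U_diff] [same_channel _]] [M_herm [M_psd M_sum]].
apply: fisher_le_C_Ups => // t.
exact/same_channel/proj_density.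
Qed.
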